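(* Let $\mathcal M$ be a mixture of $L$ Markov chains on $n$ states such that $s^\ell_j>0$ for all $\ell,j$, the matrices $P_j$ and $M^+_j$ have rank $L$ for all $j$, $\mathcal M$ is companion-connected, and the co-kernel of $\mathcal A=\mathcal A(P_1,\dots,P_n,Q_1,\dots,Q_n)$ is spanned by the indicator vectors $\xi^\ell_C$ ($\ell\in[L]$, $C\in\mathcal C^\ell$). Let $P'_j,Q'_j$, $\mathcal A'$ and $Y'_j,Z'_j\in\mathbb R^{r\times L}$ be as defined in the context (for an arbitrary choice of basis of the co-kernel of $\mathcal A'$). Then for any states $i,j\in[n]$: $\Xi_i=\Xi_j$ (i.e. $i$ and $j$ lie in the same connected component in every chain) if and only if the $r\times r$ matrix $(Z'_j\overline{Y'_j})^\dagger(Z'_i\overline{Y'_i})$ has rank $L$ and is the Moore–Penrose pseudoinverse of $(Z'_i\overline{Y'_i})^\dagger(Z'_j\overline{Y'_j})$.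
   Context: A mixture of $L$ Markov chains on $[n]$: row-stochastic $M^1,\dots,M^L\in\mathbb R^{n\times n}$ and starting vectors $s^\ell\in\mathbb R^n_{\ge0}$ with $\sum_{\ell,i}s^\ell_i=1$; 3-trail distribution $p(i,j,k)=\sum_\ell s^\ell_iM^\ell_{ij}M^\ell_{jk}$; $O_j\in\mathbb R^{n\times n}$, $O_j(i,k)=p(i,j,k)$. $P_j,Q_j,M^+_j\in\mathbb R^{L\times n}$: $P_j(\ell,i)=s^\ell_iM^\ell_{ij}$, $Q_j(\ell,k)=s^\ell_jM^\ell_{jk}$, $M^+_j(\ell,k)=M^\ell_{jk}$. $\overline A$ denotes the transpose, $A^\dagger$ the pseudoinverse. Shuffle matrix $\mathcal A(P_1,\dots,P_n,Q_1,\dots,Q_n)\in\mathbb R^{2Ln\times n^2}$: rows indexed by $(j,\ell,\pm)\in[n]\times[L]\times\{+,-\}$, columns by $(i,j)\in[n]^2$, with $\mathcal A_{(j,\ell,+),(i,j)}=P_j(\ell,i)$, $\mathcal A_{(i,\ell,-),(i,j)}=-Q_i(\ell,j)$, all other entries $0$. Its co-kernel is $\{v\in\mathbb R^{2Ln}:v^\top\mathcal A=0\}$; write $v^\ell_{j^\pm}=v_{(j,\ell,\pm)}$. Graphs: $G^\ell$ is the bipartite graph on $V^\pm=\{1^\pm,\dots,n^\pm\}$ with an edge $\{i^-,j^+\}$ whenever $M^\ell_{ij}>0$; $\mathcal C^\ell$ its connected components; $r=\sum_\ell|\mathcal C^\ell|$. Indicator $\xi^\ell_C\in\mathbb R^{2Ln}$: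 $(\xi^\ell_C)^{\ell'}_x=1$ iff $\ell'=\ell$ and $x\in C$. Companion-connected: for each $j$ there is $i\ne j$ such that for every $\ell$, $j^-$ and $i^-$ lie in the same component of $G^\ell$ as $j^+$. Enumerate all components as $q=1,\dots,r$; $\Xi_j\in\{0,1\}^{r\times L}$ has $\Xi_j(q,\ell)=1$ iff the $q$-th component belongs to $\mathcal C^\ell$ and contains $j^+$ (equivalently $j^-$). Estimated factors: for each $j$, $O_j$ has rank $L$; let $O_j=\overline{U_j}\Sigma_jV_j$ be a compact singular value decomposition with $U_j,V_j\in\mathbb R^{L\times n}$ having orthonormal rows and $\Sigma_j\in\mathbb R^{L\times L}$ diagonal positive; set $P'_j=U_j$, $Q'_j=\Sigma_jV_j$, and $\mathcal A'=\mathcal A(P'_1,\dots,P'_n,Q'_1,\dots,Q'_n)$. Let the rows of a matrix $B\in\mathbb R^{r\times 2Ln}$ be a basis of the co-kernel of $\mathcal A'$ (which has dimension $r$ under the hypotheses), and write $B=(Y'_1,\dots,Y'_n,Z'_1,\dots,Z'_n)$ where $Y'_j\in\mathbb R^{r\times L}$ consists of the columns of $B$ indexed by $(j,\ell,+)$, $\ell\in[L]$, and $Z'_j\in\mathbb R^{r\times L}$ of those indexed by $(j,\ell,-)$, $\ell\in[L]$. *)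

From HB Require Import structures.
From mathcomp Require Import all_boot all_order all_algebra.
From mathcomp Require Import reals.
From Stdlib Require Import ClassicalEpsilon.
Set Implicit Arguments. Unset Strict Implicit. Unset Printing Implicit Defensive.
Import Order.TTheory GRing.Theory Num.Theory.
Local Open Scope ring_scope.

Section Defs.
Variable R : realType.
Variables L n : nat.

Definition mixture (M : 'I_L -> 'M[R]_n) (s : 'I_L -> 'I_n -> R) : Prop :=
  (forall l i j, 0 <= M l i j) /\
  (forall l i, \sum_(j < n) M l i j = 1) /\
  (forall l i, 0 <= s l i) /\
  \sum_(l < L) \sum_(i < n) s l i = 1.

(* O_j(i,k) = p(i,j,k) *)
Definition Omat (M : 'I_L -> 'M[R]_n) (s : 'I_L -> 'I_n -> R) (j : 'I_n)
  : 'M[R]_n := \matrix_(i, k) \sum_(l < L) s l i * M l i j * M l j k.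

Definition Pmat (M : 'I_L -> 'M[R]_n) (s : 'I_L -> 'I_n -> R) (j : 'I_n)
  : 'M[R]_(L, n) := \matrix_(l, i) (s l i * M l i j).
Definition Qmat (M : 'I_L -> 'M[R]_n) (s : 'I_L -> 'I_n -> R) (j : 'I_n)
  : 'M[R]_(L, n) := \matrix_(l, k) (s l j * M l j k).
Definition Mplus (M : 'I_L -> 'M[R]_n) (j : 'I_n) : 'M[R]_(L, n) :=
  \matrix_(l, k) M l j k.

(* Row indices (j, l, b) of the shuffle matrix: b = true is '+', false is '-'.
   Column indices (i, j). *)
Definition rowidx := ('I_n * 'I_L * bool)%type.
Definition colidx := ('I_n * 'I_n)%type.

Definition shuffle (P Q : 'I_n -> 'M[R]_(L, n)) (x : rowidx) (c : colidx) : R :=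
  let: (k, l, b) := x in
  let: (i, j) := c in
  if b then (if j == k then P k l i else 0)
  else (if i == k then - Q k l j else 0).

Definition in_coker (A : rowidx -> colidx -> R) (v : rowidx -> R) : Prop :=
  forall c : colidx, \sum_(x : rowidx) v x * A x c = 0.

(* Vertices of G^l: (i, false) = i^-, (i, true) = i^+. *)
Definition vertex := ('I_n * bool)%type.

Definition medge (Ml : 'M[R]_n) : rel vertex :=
  fun x y =>
    match x, y with
    | (i, false), (j, true) => 0 < Ml i j
    | (j, true), (i, false) => 0 < Ml i j
    | _, _ => false
    end.

Definition comps (Ml : 'M[R]_n) : {set {set vertex}} :=
  [set [set y | connect (medge Ml) x y] | x : vertex].

Definition ncomp (M : 'I_L -> 'M[R]_n) : nat := \sum_(l < L) #|comps (M l)|.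

Definition xi (l : 'I_L) (C : {set vertex}) (x : rowidx) : R :=
  let: (k, l', b) := x in if (l' == l) && ((k, b) \in C) then 1 else 0.

Definition coker_spanned_by_indicators (M : 'I_L -> 'M[R]_n)
  (A : rowidx -> colidx -> R) : Prop :=
  (forall l C, C \in comps (M l) -> in_coker A (xi l C)) /\
  (forall v, in_coker A v ->
     exists a : 'I_L -> {set vertex} -> R,
       forall x, v x = \sum_(l < L) \sum_(C in comps (M l)) a l C * xi l C x).

Definition companion_connected (M : 'I_L -> 'M[R]_n) : Prop :=
  forall j : 'I_n, exists2 i : 'I_n, i != j &
    forall l : 'I_L,
      connect (medge (M l)) (j, true) (j, false) /\
      connect (medge (M l)) (j, true) (i, false).

(* Xi_j(q,l') for the component q = (l, C), C in C^l:
   1 iff l' = l and C contains j^+. *)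
Definition Xi (j : 'I_n) (l : 'I_L) (C : {set vertex}) (l' : 'I_L) : bool :=
  (l' == l) && ((j, true) \in C).

Definition Xi_eq (M : 'I_L -> 'M[R]_n) (i j : 'I_n) : Prop :=
  forall (l : 'I_L) (C : {set vertex}), C \in comps (M l) ->
    forall l' : 'I_L, Xi i l C l' = Xi j l C l'.

Definition compact_svd (O : 'M[R]_n) (U : 'M[R]_(L, n)) (S : 'M[R]_L)
  (V : 'M[R]_(L, n)) : Prop :=
  U *m U^T = 1%:M /\ V *m V^T = 1%:M /\
  (forall a b : 'I_L, a != b -> S a b = 0) /\
  (forall a : 'I_L, 0 < S a a) /\
  O = U^T *m S *m V.

Definition coker_basis (r : nat) (A : rowidx -> colidx -> R)
  (B : 'I_r -> rowidx -> R) : Prop :=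
  (forall q, in_coker A (B q)) /\
  (forall a : 'I_r -> R, (forall x, \sum_(q < r) a q * B q x = 0) ->
     forall q, a q = 0) /\
  (forall v, in_coker A v ->
     exists a : 'I_r -> R, forall x, v x = \sum_(q < r) a q * B q x).

Definition Yprime (r : nat) (B : 'I_r -> rowidx -> R) (j : 'I_n) : 'M[R]_(r, L) :=
  \matrix_(q, l) B q (j, l, true).
Definition Zprime (r : nat) (B : 'I_r -> rowidx -> R) (j : 'I_n) : 'M[R]_(r, L) :=
  \matrix_(q, l) B q (j, l, false).

End Defs.

Definition penrose (R : realType) (m p : nat) (A : 'M[R]_(m, p))
  (X : 'M[R]_(p, m)) : Prop :=
  A *m X *m A = A /\ X *m A *m X = X /\
  (A *m X)^T = A *m X /\ (X *m A)^T = X *m A.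

Definition pinv (R : realType) (m p : nat) (A : 'M[R]_(m, p)) : 'M[R]_(p, m) :=
  epsilon (inhabits 0) (fun X => penrose A X).

From HB Require Import structures.
From mathcomp Require Import all_boot all_order all_algebra.
From mathcomp Require Import reals.
From Stdlib Require Import ClassicalEpsilon.
Import Order.TTheory GRing.Theory Num.Theory.
Local Open Scope ring_scope.

(* If
      W has full column rank and D_i, D_j are invertible, then K_i = W D_i W^T
      and K_j = W D_j W^T satisfy  rank (K_j^+ K_i) = L  and
      (K_i^+ K_j)^+ = K_j^+ K_i.  Conversely, if K_i = W_i D_i W_i^T and
      K_j = W_j D_j W_j^T satisfy these two conditions, then the columns of
      W_j lie in the column space of W_i.
   2. Change of gauge.  From the compact SVD of O_j = P_j^T M^+_j one gets an
      invertible G_j with P'_j = G_j P_j and Q'_j = K_j Q_j, where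
      K_j = G_j^-T D_j^-1 and D_j = diag(s_j).  Multiplying the blocks of a
      vector by G_j and K_j maps the co-kernel of A' onto that of A.
   3. Components.  The image of the basis vector B_q is a combination
      sum a_q(l,C) xi^l_C of indicators, and the coefficient matrix a has a left
      inverse.  Hence W_k(q,l) = a_q(l, component of k^+ in G^l) has full
      column rank, Z'_k Y'_k^T = W_k D_k W_k^T, and W_j = W_i E happens exactly
      when i and j lie in the same component of every G^l. *)

Set Implicit Arguments. Unset Strict Implicit. Unset Printing Implicit Defensive.

Lemma invmx_mulV (R : comUnitRingType) m (A B : 'M[R]_m) :
  A \in unitmx -> B \in unitmx -> invmx (invmx A *m B) = invmx B *m A.
Proof.
move=> uA uB; have uAB : invmx A *m B \in unitmx by rewrite unitmx_mul unitmx_inv uA.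
have AB_inv : invmx A *m B *m (invmx B *m A) = 1%:M.
  by rewrite mulmxA mulmxK // mulVmx.
by rewrite -[LHS]mulmx1 -AB_inv mulmxA mulVmx // mul1mx.
Qed.

Section RealMatrices.
Variable R : realFieldType.

Lemma row_free_of_inj m p (A : 'M[R]_(m, p)) :
  (forall u : 'rV_m, u *m A = 0 -> u = 0) -> row_free A.
Proof.
move=> Ainj; rewrite -kermx_eq0; apply/eqP/row_matrixP => i.
by rewrite row0; apply: Ainj; rewrite -row_mul mulmx_ker row0.
Qed.

(* Over an ordered field Z^T Z = 0 forces Z = 0: its diagonal holds the squared
   norms of the columns of Z. *)
Lemma trmx_mul_self_eq0 m p (Z : 'M[R]_(m, p)) : Z^T *m Z = 0 -> Z = 0.
Proof.
move=> ZZ0; apply/matrixP => q k; rewrite mxE.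
have sq_ge0 : forall j, predT j -> 0 <= Z^T k j * Z j k.
  by move=> j _; rewrite mxE -expr2 sqr_ge0.
have := congr1 (fun A : 'M_p => A k k) ZZ0; rewrite !mxE => sum0.
have := psumr_eq0P sq_ge0 sum0 (isT : predT q).
by rewrite mxE => /eqP; rewrite mulf_eq0 orbb => /eqP.
Qed.

Lemma gram_unit k m (F : 'M[R]_(k, m)) : row_free F -> F *m F^T \in unitmx.
Proof.
move=> F_free; rewrite -row_free_unit; apply: row_free_of_inj => u uFF0.
apply: (row_free_inj F_free); rewrite mul0mx -[u *m F]trmxK.
apply/eqP; rewrite trmx_eq0; apply/eqP/trmx_mul_self_eq0.
by rewrite trmxK trmx_mul mulmxA -(mulmxA u) uFF0 mul0mx.
Qed.

(* An orthogonal projection Pi fixes W as soon as W^T Pi W = W^T W, i.e. as soon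
   as projecting does not shorten the columns of W. *)
Lemma orthoproj_fix m p (Pi : 'M[R]_m) (W : 'M[R]_(m, p)) :
  Pi^T = Pi -> Pi *m Pi = Pi -> W^T *m Pi *m W = W^T *m W -> Pi *m W = W.
Proof.
move=> PiT PiPi WPiW; apply/eqP; rewrite -subr_eq0; apply/eqP/trmx_mul_self_eq0.
rewrite [(_ - _)^T]linearB /= trmx_mul PiT mulmxBl !mulmxBr !mulmxA.
by rewrite -(mulmxA _ Pi Pi) PiPi WPiW !subrr.
Qed.

Lemma diag_mx_unit m (d : 'rV[R]_m) :
  (forall l, d 0 l != 0) -> diag_mx d \in unitmx.
Proof.
by move=> d_neq0; rewrite unitmxE det_diag unitfE; apply/prodf_neq0 => l _.
Qed.

End RealMatrices.

(* The left inverse (W^T W)^-1 W^T of a matrix with independent columns;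
   locked so that matrix rewriting does not unfold it. *)
HB.lock Definition lpinv (R : realFieldType) (r L : nat) (W : 'M[R]_(r, L))
  : 'M[R]_(L, r) := invmx (W^T *m W) *m W^T.

Section LeftPseudoinverse.
Variables (R : realFieldType) (r L : nat) (W : 'M[R]_(r, L)).

Lemma lpinv_tr : (lpinv W)^T = W *m invmx (W^T *m W).
Proof. by rewrite lpinv.unlock trmx_mul trmxK trmx_inv trmx_mul trmxK. Qed.

(* W lpinv(W) is the orthogonal projection onto the column space of W. *)
Lemma lpinv_proj_tr : (W *m lpinv W)^T = W *m lpinv W.
Proof. by rewrite trmx_mul lpinv_tr lpinv.unlock mulmxA. Qed.

Lemma lpinv_trK : (lpinv W)^T *m W^T = W *m lpinv W.
Proof. by rewrite lpinv_tr lpinv.unlock mulmxA. Qed.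

Hypothesis W_free : row_free W^T.

Lemma gram_tr_unit : W^T *m W \in unitmx.
Proof. by have := gram_unit W_free; rewrite trmxK. Qed.

Lemma lpinvK : lpinv W *m W = 1%:M.
Proof. by rewrite lpinv.unlock -mulmxA mulVmx // gram_tr_unit. Qed.

Lemma tr_lpinvK : W^T *m (lpinv W)^T = 1%:M.
Proof. by rewrite -trmx_mul lpinvK trmx1. Qed.

Lemma gram_lpinv : W^T *m W *m lpinv W = W^T.
Proof. by rewrite lpinv.unlock mulmxA mulmxV ?gram_tr_unit // mul1mx. Qed.

Lemma lpinv_proj_idem : W *m lpinv W *m (W *m lpinv W) = W *m lpinv W.
Proof. by rewrite mulmxA -(mulmxA W) lpinvK mulmx1. Qed.

Lemma lpinv_proj_fix_tr : W *m lpinv W *m (lpinv W)^T = (lpinv W)^T.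
Proof. by rewrite -lpinv_proj_tr -trmx_mul mulmxA lpinvK mul1mx. Qed.

Lemma lpinv_free : row_free (lpinv W).
Proof.
apply: row_free_of_inj => u uW0.
by rewrite -[u]mulmx1 -lpinvK mulmxA uW0 mul0mx.
Qed.

End LeftPseudoinverse.

Section Pseudoinverse.
Variable R : realType.

Lemma penrose_unique m p (A : 'M[R]_(m, p)) X Y :
  penrose A X -> penrose A Y -> X = Y.
Proof.
move=> [AXA [XAX [AXT XAT]]] [AYA [YAY [AYT YAT]]].
have eX : X = X *m A *m Y.
  transitivity (X *m (A *m X)^T); first by rewrite AXT mulmxA XAX.
  rewrite trmx_mul -{1}AYA !trmx_mul !mulmxA.
  rewrite -(mulmxA X X^T) -trmx_mul AXT -(mulmxA _ Y^T) -trmx_mul AYT.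
  by rewrite !mulmxA XAX.
have eY : Y = X *m A *m Y.
  transitivity ((Y *m A)^T *m Y); first by rewrite YAT YAY.
  rewrite trmx_mul -{1}AXA !trmx_mul -!mulmxA.
  rewrite (mulmxA A^T X^T) -trmx_mul XAT (mulmxA A^T) -trmx_mul YAT.
  by rewrite (mulmxA (X *m A)) -(mulmxA _ (Y *m A)) YAY mulmxA.
by rewrite {1}eX -eY.
Qed.

Lemma penrose_full_rank m k p (F : 'M[R]_(m, k)) (G : 'M[R]_(k, p)) :
  row_free F^T -> row_free G ->
  penrose (F *m G) (G^T *m invmx (G *m G^T) *m invmx (F^T *m F) *m F^T).
Proof.
move=> Ft_free G_free.
have uG := gram_unit G_free; have uF := gram_tr_unit Ft_free.
have eAX : F *m G *m (G^T *m invmx (G *m G^T) *m invmx (F^T *m F) *m F^T)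
   = F *m lpinv F.
  by rewrite lpinv.unlock !mulmxA -(mulmxA F G) -(mulmxA F) mulmxV // mulmx1.
have eXA : (G^T *m invmx (G *m G^T) *m invmx (F^T *m F) *m F^T) *m (F *m G)
   = G^T *m invmx (G *m G^T) *m G.
  by rewrite !mulmxA -(mulmxA _ F^T F) mulmxKV.
split; [|split; [|split]].
- by rewrite eAX mulmxA -(mulmxA F) lpinvK // mulmx1.
- by rewrite eXA !mulmxA -(mulmxA _ G G^T) mulmxK.
- by rewrite eAX lpinv_proj_tr.
- by rewrite eXA !trmx_mul trmxK trmx_inv trmx_mul trmxK mulmxA.
Qed.

Lemma pinv_spec m p (A : 'M[R]_(m, p)) : penrose A (pinv A).
Proof.
rewrite /pinv; apply: epsilon_spec.
have Ct_free : row_free (col_base A)^T.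
  by rewrite /row_free mxrank_tr; apply: col_base_full.
have := penrose_full_rank Ct_free (row_base_free A).
by rewrite mulmx_base; eexists; eassumption.
Qed.

Lemma pinv_eq m p (A : 'M[R]_(m, p)) X : penrose A X -> pinv A = X.
Proof. exact: penrose_unique (pinv_spec A). Qed.

End Pseudoinverse.

Section CongruencePinv.
Variables (R : realType) (r L : nat).

Lemma pinv_congr (W : 'M[R]_(r, L)) D : row_free W^T -> D \in unitmx ->
  pinv (W *m D *m W^T) = (lpinv W)^T *m invmx D *m lpinv W.
Proof.
move=> W_free uD; apply: pinv_eq.
have e1 : W *m D *m W^T *m ((lpinv W)^T *m invmx D *m lpinv W) = W *m lpinv W.
  by rewrite !mulmxA -(mulmxA _ W^T) tr_lpinvK // mulmx1 mulmxK.
have e2 : (lpinv W)^T *m invmx D *m lpinv W *m (W *m D *m W^T) = W *m lpinv W.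
  by rewrite !mulmxA -(mulmxA _ (lpinv W) W) lpinvK // mulmx1 mulmxKV // lpinv_trK.
split; [|split; [|split]].
- by rewrite e1 !mulmxA -(mulmxA W) lpinvK // mulmx1.
- by rewrite e2 -lpinv_trK !mulmxA -(mulmxA _ W^T) tr_lpinvK // mulmx1.
- by rewrite e1 lpinv_proj_tr.
- by rewrite e2 lpinv_proj_tr.
Qed.

Lemma pinv_congr_mul (W : 'M[R]_(r, L)) D1 D2 : row_free W^T -> D1 \in unitmx ->
  pinv (W *m D1 *m W^T) *m (W *m D2 *m W^T)
    = (lpinv W)^T *m (invmx D1 *m D2) *m W^T.
Proof.
move=> W_free uD1; rewrite pinv_congr // !mulmxA -(mulmxA _ (lpinv W)) lpinvK //.
by rewrite mulmx1.
Qed.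

Lemma penrose_lpinv_conj (W : 'M[R]_(r, L)) E : row_free W^T -> E \in unitmx ->
  penrose ((lpinv W)^T *m E *m W^T) ((lpinv W)^T *m invmx E *m W^T).
Proof.
move=> W_free uE.
have e1 : (lpinv W)^T *m E *m W^T *m ((lpinv W)^T *m invmx E *m W^T) = W *m lpinv W.
  by rewrite !mulmxA -(mulmxA _ W^T) tr_lpinvK // mulmx1 mulmxK // lpinv_trK.
have e2 : (lpinv W)^T *m invmx E *m W^T *m ((lpinv W)^T *m E *m W^T) = W *m lpinv W.
  by rewrite !mulmxA -(mulmxA _ W^T) tr_lpinvK // mulmx1 mulmxKV // lpinv_trK.
have proj_fix F : W *m lpinv W *m ((lpinv W)^T *m F *m W^T) = (lpinv W)^T *m F *m W^T.
  by rewrite !mulmxA lpinv_proj_fix_tr.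
split; [|split; [|split]].
- by rewrite e1 proj_fix.
- by rewrite e2 proj_fix.
- by rewrite e1 lpinv_proj_tr.
- by rewrite e2 lpinv_proj_tr.
Qed.

Lemma pinv_condition_same (W : 'M[R]_(r, L)) Di Dj : row_free W^T ->
  Di \in unitmx -> Dj \in unitmx ->
  \rank (pinv (W *m Dj *m W^T) *m (W *m Di *m W^T)) = L /\
  pinv (pinv (W *m Di *m W^T) *m (W *m Dj *m W^T))
    = pinv (W *m Dj *m W^T) *m (W *m Di *m W^T).
Proof.
move=> W_free uDi uDj; rewrite !pinv_congr_mul //.
have uE : invmx Di *m Dj \in unitmx by rewrite unitmx_mul unitmx_inv uDi uDj.
split.
  rewrite mxrankMfree // -mxrank_tr trmx_mul trmxK mxrankMfree ?lpinv_free //.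
  by rewrite mxrank_tr mxrank_unit // unitmx_mul unitmx_inv uDj.
by apply: pinv_eq; rewrite -(invmx_mulV uDi uDj); apply: penrose_lpinv_conj.
Qed.

Lemma pinv_condition_range (Wi Wj : 'M[R]_(r, L)) Di Dj :
  row_free Wi^T -> row_free Wj^T -> Di \in unitmx -> Dj \in unitmx ->
  \rank (pinv (Wj *m Dj *m Wj^T) *m (Wi *m Di *m Wi^T)) = L ->
  pinv (pinv (Wi *m Di *m Wi^T) *m (Wj *m Dj *m Wj^T))
    = pinv (Wj *m Dj *m Wj^T) *m (Wi *m Di *m Wi^T) ->
  Wi *m lpinv Wi *m Wj = Wj.
Proof.
move=> Wi_free Wj_free uDi uDj rkX pinvY.
set Y := pinv _ *m _ in pinvY; set X := pinv _ *m _ in rkX pinvY.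
have [_ [XYX _]] : penrose Y X by rewrite -pinvY; apply: pinv_spec.
set T := lpinv Wj *m Wi *m Di *m Wi^T.
set N := lpinv Wj *m (Wi *m lpinv Wi) *m Wj.
have eX : X = (lpinv Wj)^T *m invmx Dj *m T by rewrite /X pinv_congr // /T !mulmxA.
have eXYX : X *m Y *m X = (lpinv Wj)^T *m invmx Dj *m N *m T.
  rewrite eX /Y pinv_congr // /T /N !mulmxA -(mulmxA _ Wi^T) tr_lpinvK // mulmx1.
  by rewrite mulmxK // -(mulmxA _ Wj^T) tr_lpinvK // mulmx1 mulmxK // !mulmxA.
have T_free : row_free T.
  by rewrite /row_free eqn_leq rank_leq_row -{1}rkX eX mxrankM_maxr.
(* The rank condition lets us cancel T in X Y X = X, so Wj^+ Pi_i Wj = 1. *)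
have N1 : N = 1%:M.
  apply: (row_free_inj T_free); rewrite mul1mx /=.
  have := congr1 (mulmx (Dj *m Wj^T)) XYX; rewrite eXYX eX.
  rewrite !mulmxA -(mulmxA _ Wj^T) tr_lpinvK // mulmx1 mulmxV // !mul1mx.
  by rewrite /N /T !mulmxA => ->.
apply: (orthoproj_fix (lpinv_proj_tr Wi) (lpinv_proj_idem Wi_free)).
by rewrite -[RHS]mulmx1 -N1 /N !mulmxA gram_lpinv.
Qed.

End CongruencePinv.

Section ShuffleCokernel.
Variables (R : realType) (L n : nat).

Definition vblock (v : rowidx L n -> R) (k : 'I_n) (b : bool) : 'rV[R]_L :=
  \row_l v (k, l, b).

Lemma sum_rowidx (F : rowidx L n -> R) :
  \sum_(x : rowidx L n) F x =
  \sum_(k < n) \sum_(l < L) (F (k, l, true) + F (k, l, false)).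
Proof.
transitivity (\sum_(p : ('I_n * 'I_L) * bool) F (p.1, p.2)).
  by apply: eq_bigr => -[].
rewrite -(pair_bigA _ (fun kl b => F (kl, b))) /=.
transitivity (\sum_(p : 'I_n * 'I_L) \sum_b F (p.1, p.2, b)).
  by apply: eq_bigr => -[].
rewrite -(pair_bigA _ (fun k l => \sum_b F (k, l, b))) /=.
by apply: eq_bigr => k _; apply: eq_bigr => l _; rewrite big_bool.
Qed.

Lemma sum_select (b : 'I_n) (F G : 'I_n -> 'I_L -> R) :
  \sum_(k < n) \sum_(l < L) F k l * (if b == k then G k l else 0) =
  \sum_(l < L) F b l * G b l.
Proof.
rewrite (bigD1 b) //= eqxx [X in _ + X]big1 ?addr0 // => k /negPf kb.
by apply: big1 => l _; rewrite eq_sym kb mulr0.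
Qed.

(* Column (a, b) of the shuffle matrix meets only the blocks (b, +) and (a, -),
   so v^T A = 0 reads: (v_b^+ P_b)_a = (v_a^- Q_a)_b for all states a, b. *)
Lemma coker_shuffleP (P Q : 'I_n -> 'M[R]_(L, n)) v :
  in_coker (shuffle P Q) v <->
  forall a b : 'I_n, (vblock v b true *m P b) 0 a = (vblock v a false *m Q a) 0 b.
Proof.
have column_sum a b : \sum_(x : rowidx L n) v x * shuffle P Q x (a, b) =
    (vblock v b true *m P b) 0 a - (vblock v a false *m Q a) 0 b.
  rewrite sum_rowidx /=; under eq_bigr => k _ do rewrite big_split /=.
  rewrite big_split /= sum_select (sum_select a _ (fun k l => - Q k l b)).
  rewrite !mxE -sumrN; congr (_ + _); apply: eq_bigr => l _; rewrite !mxE //.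
  by rewrite mulrN.
split=> [vA0 a b | h [a b]]; last by rewrite /= column_sum h subrr.
by apply/eqP; rewrite -subr_eq0 -column_sum; apply/eqP/(vA0 (a, b)).
Qed.

Definition rescale (G K : 'I_n -> 'M[R]_L) (v : rowidx L n -> R) : rowidx L n -> R :=
  fun x => let: (k, l, b) := x in (vblock v k b *m (if b then G k else K k)) 0 l.

Lemma vblock_rescale G K v k b :
  vblock (rescale G K v) k b = vblock v k b *m (if b then G k else K k).
Proof. by apply/rowP => l; rewrite mxE. Qed.

Lemma rescale_lin m G K (c : 'I_m -> R) (w : 'I_m -> rowidx L n -> R) v :
  (forall x, v x = \sum_q c q * w q x) ->
  forall x, rescale G K v x = \sum_q c q * rescale G K (w q) x.
Proof.
move=> vE [[k l] b] /=.
have vblockE : vblock v k b = \sum_q c q *: vblock (w q) k b.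
  apply/rowP => t; rewrite summxE !mxE vE.
  by apply: eq_bigr => q _; rewrite !mxE.
by rewrite vblockE mulmx_suml summxE; apply: eq_bigr => q _; rewrite -scalemxAl mxE.
Qed.

Lemma rescaleK G K v : (forall k, G k \in unitmx) -> (forall k, K k \in unitmx) ->
  forall x, rescale G K (rescale (fun k => invmx (G k)) (fun k => invmx (K k)) v) x = v x.
Proof.
move=> uG uK [[k l] []] /=; rewrite vblock_rescale -mulmxA.
  by rewrite mulVmx // mulmx1 mxE.
by rewrite mulVmx // mulmx1 mxE.
Qed.

Lemma coker_rescale (P Q P' Q' : 'I_n -> 'M[R]_(L, n)) G K v :
  (forall k, P' k = G k *m P k) -> (forall k, Q' k = K k *m Q k) ->
  in_coker (shuffle P' Q') v <-> in_coker (shuffle P Q) (rescale G K v).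
Proof.
move=> P'E Q'E; split=> /coker_shuffleP vA0; apply/coker_shuffleP => a b;
  by move: (vA0 a b); rewrite !vblock_rescale P'E Q'E !mulmxA.
Qed.

Lemma in_coker_ext (A : rowidx L n -> colidx n -> R) v w :
  (forall x, v x = w x) -> in_coker A v -> in_coker A w.
Proof. by move=> vw vA0 c; rewrite -[RHS](vA0 c); apply: eq_bigr => x _; rewrite vw. Qed.

End ShuffleCokernel.

(* If P^T Mp = U^T S V is a compact SVD and P has independent rows, then the
   factors U and S V agree with P and Mp up to the gauge G = S^-T V Mp^T. *)
HB.lock Definition svd_gauge (R : realFieldType) L n (S : 'M[R]_L) (V Mp : 'M[R]_(L, n))
  : 'M[R]_L := (invmx S)^T *m V *m Mp^T.

Section SvdGauge.
Variables (R : realFieldType) (L n : nat) (P Mp U V : 'M[R]_(L, n)) (S : 'M[R]_L).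
Let G := svd_gauge S V Mp.

Hypotheses (P_free : row_free P) (U_orth : U *m U^T = 1%:M)
  (V_orth : V *m V^T = 1%:M) (S_unit : S \in unitmx)
  (factor_svd : P^T *m Mp = U^T *m S *m V).

Lemma svd_gauge_left : U = G *m P.
Proof.
have UtE : U^T = P^T *m Mp *m V^T *m invmx S.
  by rewrite factor_svd -(mulmxA _ V) V_orth mulmx1 mulmxK.
by rewrite -[U]trmxK UtE !trmx_mul !trmxK /G svd_gauge.unlock !mulmxA.
Qed.

Lemma svd_gauge_unit : G \in unitmx.
Proof.
have : G *m (P *m U^T) = 1%:M by rewrite mulmxA -svd_gauge_left.
by case/mulmx1_unit.
Qed.

Lemma svd_gauge_right : S *m V = invmx G^T *m Mp.
Proof.
have GtSV : G^T *m (S *m V) = Mp.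
  have PtGtSV : P^T *m (G^T *m (S *m V)) = P^T *m Mp.
    by rewrite mulmxA -trmx_mul -svd_gauge_left factor_svd mulmxA.
  apply: trmx_inj; apply: (row_free_inj P_free).
  by rewrite -[P]trmxK -!trmx_mul PtGtSV.
by rewrite -GtSV mulKmx // unitmx_tr svd_gauge_unit.
Qed.

End SvdGauge.

Lemma compact_svd_unit (R : realType) L n (O : 'M[R]_n) U (S : 'M[R]_L) V :
  compact_svd O U S V -> S \in unitmx.
Proof.
move=> [_ [_ [S_diag [S_pos _]]]].
have -> : S = diag_mx (\row_a S a a).
  apply/matrixP => a b; rewrite !mxE.
  by have [->|ab] := eqVneq a b; [rewrite mulr1n | rewrite mulr0n S_diag].
by apply: diag_mx_unit => a; rewrite mxE gt_eqF.
Qed.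

Section Components.
Variables (R : realType) (L n : nat) (M : 'I_L -> 'M[R]_n).
Hypothesis M_cc : companion_connected M.

Lemma medge_sym l : symmetric (medge (M l)).
Proof. by move=> [i []] [j []]. Qed.

Definition comp_of (l : 'I_L) (k : 'I_n) : {set vertex n} :=
  [set y | connect (medge (M l)) (k, true) y].

Lemma comp_of_in l k : comp_of l k \in comps (M l).
Proof. exact: imset_f. Qed.

(* By companion-connectedness k^+ and k^- lie in the same component, so a
   component contains (k, b) exactly when it is the component of k. *)
Lemma in_compE l C k b : C \in comps (M l) -> ((k, b) \in C) = (C == comp_of l k).
Proof.
have csym := sym_connect_sym (@medge_sym l).
case/imsetP => x _ ->; have [_ _ /(_ l) [k_pm _]] := M_cc k.
have sign_irr : connect (medge (M l)) x (k, b) = connect (medge (M l)) x (k, true).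
  case: b => //; apply/idP/idP => xk; apply: connect_trans xk _ => //.
  by rewrite csym.
rewrite inE sign_irr; apply/idP/eqP => [xk | /setP/(_ (k, true))]; last first.
  by rewrite /comp_of !inE connect0 => ->.
by apply/setP => z; rewrite !inE (same_connect csym xk).
Qed.

Lemma comps_comp_of l C : C \in comps (M l) -> exists k, C = comp_of l k.
Proof.
move=> C_in; have /imsetP [[k b] _ CE] := C_in; exists k.
by apply/eqP; rewrite -(in_compE k b C_in) CE inE connect0.
Qed.

Lemma Xi_eq_comp_of i j : Xi_eq M i j <-> forall l, comp_of l i = comp_of l j.
Proof.
split=> [XiE l | compE l C C_in l'].
  have := XiE l _ (comp_of_in l i) l.
  rewrite /Xi eqxx /= (in_compE i true (comp_of_in l i)).
  by rewrite (in_compE j true (comp_of_in l i)) eqxx => /esym/eqP.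
by rewrite /Xi (in_compE i true C_in) (in_compE j true C_in) compE.
Qed.

Lemma sum_delta (T : finType) (A : {pred T}) (c : T) (F : T -> R) :
  c \in A -> \sum_(C in A) (C == c)%:R * F C = F c.
Proof.
move=> cA; rewrite (bigD1 c) //= eqxx mul1r [X in _ + X]big1 ?addr0 //.
by move=> C /andP [_ /negPf ->]; rewrite mul0r.
Qed.

Lemma sum_comps_delta (f : 'I_L -> {set vertex n} -> R) l0 C0 :
  C0 \in comps (M l0) ->
  \sum_(l < L) \sum_(C in comps (M l)) ((l == l0) && (C == C0))%:R * f l C = f l0 C0.
Proof.
move=> C0_in; rewrite (bigD1 l0) //= [X in _ + X]big1 ?addr0.
  by under eq_bigr => C _ do rewrite eqxx /=; rewrite sum_delta.
by move=> l /negPf ll0; apply: big1 => C _; rewrite ll0 mul0r.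
Qed.

Lemma sum_xi (f : 'I_L -> {set vertex n} -> R) k l0 b :
  \sum_(l < L) \sum_(C in comps (M l)) f l C * xi R l C (k, l0, b) = f l0 (comp_of l0 k).
Proof.
rewrite -(sum_comps_delta f (comp_of_in l0 k)); apply: eq_bigr => l _.
apply: eq_bigr => C C_in; rewrite /xi mulrC; congr (_ * _).
move: C_in; have [-> C_in|//] := eqVneq l l0.
by rewrite /= (in_compE k b C_in); case: (C == _).
Qed.

End Components.

Section Mixture.
Variables (R : realType) (L n : nat) (M : 'I_L -> 'M[R]_n) (s : 'I_L -> 'I_n -> R)
  (U V : 'I_n -> 'M[R]_(L, n)) (Sg : 'I_n -> 'M[R]_L)
  (B : 'I_(ncomp M) -> rowidx L n -> R).
Hypotheses (s_pos : forall l k, 0 < s l k) (P_rank : forall k, \rank (Pmat M s k) = L)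
  (M_cc : companion_connected M)
  (coker_A : coker_spanned_by_indicators M (shuffle (Pmat M s) (Qmat M s)))
  (svd_O : forall k, compact_svd (Omat M s k) (U k) (Sg k) (V k))
  (basis_B : coker_basis (shuffle U (fun k => Sg k *m V k)) B).

Definition sdiag k : 'M[R]_L := diag_mx (\row_l s l k).

Lemma sdiag_unit k : sdiag k \in unitmx.
Proof. by apply: diag_mx_unit => l; rewrite mxE gt_eqF. Qed.

Lemma Qmat_sdiag k : Qmat M s k = sdiag k *m Mplus M k.
Proof. by apply/matrixP => a b; rewrite mul_diag_mx !mxE. Qed.

Lemma Omat_factor k : Omat M s k = (Pmat M s k)^T *m Mplus M k.
Proof. by apply/matrixP => a b; rewrite !mxE; apply: eq_bigr => l _; rewrite !mxE. Qed.

Definition gauge k : 'M[R]_L := svd_gauge (Sg k) (V k) (Mplus M k).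
Definition cogauge k : 'M[R]_L := invmx (gauge k)^T *m invmx (sdiag k).

Lemma gauge_props k :
  [/\ gauge k \in unitmx, U k = gauge k *m Pmat M s k
    & Sg k *m V k = cogauge k *m Qmat M s k].
Proof.
have [U_orth [V_orth [_ [_ O_svd]]]] := svd_O k.
have P_free : row_free (Pmat M s k) by rewrite /row_free P_rank.
have S_unit := compact_svd_unit (svd_O k).
have factor : (Pmat M s k)^T *m Mplus M k = (U k)^T *m Sg k *m V k.
  by rewrite -Omat_factor.
split; first exact: svd_gauge_unit factor.
  exact: svd_gauge_left factor.
rewrite (svd_gauge_right P_free U_orth V_orth S_unit factor) Qmat_sdiag.
by rewrite mulmxA mulmxKV ?sdiag_unit.
Qed.

Lemma cogauge_unit k : cogauge k \in unitmx.
Proof.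
have [uG _ _] := gauge_props k.
by rewrite unitmx_mul !unitmx_inv unitmx_tr uG sdiag_unit.
Qed.

Lemma coker_gauge v :
  in_coker (shuffle U (fun k => Sg k *m V k)) v <->
  in_coker (shuffle (Pmat M s) (Qmat M s)) (rescale gauge cogauge v).
Proof. by apply: coker_rescale => k; have [] := gauge_props k. Qed.

Lemma coker_coords : exists a : 'I_(ncomp M) -> 'I_L -> {set vertex n} -> R,
  forall q x, rescale gauge cogauge (B q) x =
    \sum_(l < L) \sum_(C in comps (M l)) a q l C * xi R l C x.
Proof.
have [_ spanned] := coker_A; have [B_coker _] := basis_B.
have coords q := spanned _ (proj1 (coker_gauge (B q)) (B_coker q)).
exists (fun q => proj1_sig (constructive_indefinite_description _ (coords q))).
by move=> q; apply: (proj2_sig (constructive_indefinite_description _ (coords q))).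
Qed.

Section Coordinates.
Variable a : 'I_(ncomp M) -> 'I_L -> {set vertex n} -> R.
Hypothesis a_coords : forall q x,
  rescale gauge cogauge (B q) x = \sum_(l < L) \sum_(C in comps (M l)) a q l C * xi R l C x.

Definition coord_mx k : 'M[R]_(ncomp M, L) := \matrix_(q, l) a q l (comp_of M l k).

(* Y'_k G_k = W_k and Z'_k K_k = W_k: both read off the plus and minus blocks
   of the rescaled basis vectors. *)
Lemma Yprime_gauge k : Yprime B k *m gauge k = coord_mx k.
Proof.
apply/matrixP => q l; rewrite [RHS]mxE -(sum_xi M_cc _ k l true) -a_coords /= !mxE.
by apply: eq_bigr => t _; rewrite !mxE.
Qed.

Lemma Zprime_gauge k : Zprime B k *m cogauge k = coord_mx k.
Proof.
apply/matrixP => q l; rewrite [RHS]mxE -(sum_xi M_cc _ k l false) -a_coords /= !mxE.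
by apply: eq_bigr => t _; rewrite !mxE.
Qed.

Lemma ZY_congr k :
  Zprime B k *m (Yprime B k)^T = coord_mx k *m sdiag k *m (coord_mx k)^T.
Proof.
have [uG _ _] := gauge_props k.
have YE : Yprime B k = coord_mx k *m invmx (gauge k).
  by rewrite -Yprime_gauge mulmxK.
have ZE : Zprime B k = coord_mx k *m sdiag k *m (gauge k)^T.
  rewrite -(mulmxK (cogauge_unit k) (Zprime B k)) Zprime_gauge /cogauge.
  by rewrite invmx_mulV ?unitmx_tr ?unitmx_inv ?sdiag_unit // invmxK mulmxA.
by rewrite YE ZE trmx_mul trmx_inv mulmxA mulmxK // unitmx_tr.
Qed.

(* The coordinate matrix a has a left inverse: each indicator xi^l0_C0 lies in
   the co-kernel of A, so its inverse rescaling lies in the co-kernel of A' and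
   is a combination sum beta_q B_q of the basis vectors. *)
Lemma coords_left_inverse l0 C0 : C0 \in comps (M l0) ->
  exists beta : 'I_(ncomp M) -> R, forall l C, C \in comps (M l) ->
    \sum_q beta q * a q l C = ((l == l0) && (C == C0))%:R.
Proof.
move=> C0_in; have [xi_coker _] := coker_A; have [_ [_ B_span]] := basis_B.
have gauge_unit k : gauge k \in unitmx by have [] := gauge_props k.
pose w := rescale (fun k => invmx (gauge k)) (fun k => invmx (cogauge k)) (xi R l0 C0).
have w_coker : in_coker (shuffle U (fun k => Sg k *m V k)) w.
  apply/coker_gauge; apply: in_coker_ext (xi_coker _ _ C0_in) => x.
  by rewrite rescaleK; [| exact: gauge_unit | exact: cogauge_unit].
have [beta wE] := B_span _ w_coker.
exists beta => l C C_in; have [k ->] := comps_comp_of M_cc C_in.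
have xiE : xi R l0 C0 (k, l, true) = \sum_q beta q * a q l (comp_of M l k).
  rewrite -(rescaleK _ gauge_unit cogauge_unit) (rescale_lin _ _ wE).
  by apply: eq_bigr => q _; rewrite a_coords (sum_xi M_cc).
rewrite -xiE /xi (in_compE M_cc k true C0_in).
by have [->|//] := eqVneq l l0; rewrite eq_sym; case: (_ == _).
Qed.

Lemma coords_inj (X : 'I_L -> {set vertex n} -> R) :
  (forall q, \sum_(l < L) \sum_(C in comps (M l)) a q l C * X l C = 0) ->
  forall l C, C \in comps (M l) -> X l C = 0.
Proof.
move=> aX0 l0 C0 C0_in; have [beta betaE] := coords_left_inverse C0_in.
rewrite -(sum_comps_delta X C0_in).
transitivity (\sum_(l < L) \sum_(C in comps (M l)) \sum_q beta q * (a q l C * X l C)).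
  apply: eq_bigr => l _; apply: eq_bigr => C C_in.
  by rewrite -betaE // mulr_suml; apply: eq_bigr => q _; rewrite mulrA.
under eq_bigr => l _ do rewrite exchange_big /=.
rewrite exchange_big /= big1 // => q _.
transitivity (beta q * \sum_(l < L) \sum_(C in comps (M l)) a q l C * X l C).
  by rewrite mulr_sumr; apply: eq_bigr => l _; rewrite mulr_sumr.
by rewrite aX0 mulr0.
Qed.

(* W_k has full column rank: its columns are distinct columns of a. *)
Lemma coord_mx_free k : row_free (coord_mx k)^T.
Proof.
apply: row_free_of_inj => u uW0; apply/rowP => l; rewrite mxE.
pose X m C := (C == comp_of M m k)%:R * u 0 m.
have aX0 q : \sum_(m < L) \sum_(C in comps (M m)) a q m C * X m C = 0.
  transitivity ((u *m (coord_mx k)^T) 0 q); last by rewrite uW0 mxE.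
  rewrite mxE; apply: eq_bigr => m _.
  under eq_bigr => C _ do rewrite /X mulrCA.
  by rewrite sum_delta ?comp_of_in // !mxE mulrC.
by have := coords_inj aX0 (comp_of_in M l k); rewrite /X eqxx mul1r.
Qed.

Lemma coord_mx_comp_of i j (E : 'M[R]_L) :
  coord_mx j = coord_mx i *m E -> forall l, comp_of M l j = comp_of M l i.
Proof.
move=> WjE l.
pose X m C := ((m == l) && (C == comp_of M l j))%:R - (C == comp_of M m i)%:R * E m l.
have aX0 q : \sum_(m < L) \sum_(C in comps (M m)) a q m C * X m C = 0.
  transitivity (\sum_(m < L) \sum_(C in comps (M m))
      ((m == l) && (C == comp_of M l j))%:R * a q m C -
    \sum_(m < L) \sum_(C in comps (M m)) (C == comp_of M m i)%:R * (a q m C * E m l)).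
    rewrite -sumrB; apply: eq_bigr => m _; rewrite -sumrB; apply: eq_bigr => C _.
    by rewrite /X mulrBr mulrC mulrCA.
  rewrite (sum_comps_delta (fun m C => a q m C)) ?comp_of_in //.
  under eq_bigr => m _ do rewrite sum_delta ?comp_of_in //.
  have := congr1 (fun Z : 'M[R]_(ncomp M, L) => Z q l) WjE.
  rewrite /= !mxE => ->; apply/eqP; rewrite subr_eq0; apply/eqP.
  by apply: eq_bigr => m _; rewrite mxE.
have := coords_inj aX0 (comp_of_in M l j); rewrite /X !eqxx /=.
by case: eqP => // _; rewrite mul0r subr0 => /eqP; rewrite oner_eq0.
Qed.

End Coordinates.

Lemma component_criterion i j :
  Xi_eq M i j <->
     (\rank (pinv (Zprime B j *m (Yprime B j)^T) *m (Zprime B i *m (Yprime B i)^T)) = L /\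
      pinv (pinv (Zprime B i *m (Yprime B i)^T) *m (Zprime B j *m (Yprime B j)^T))
        = pinv (Zprime B j *m (Yprime B j)^T) *m (Zprime B i *m (Yprime B i)^T)).
Proof.
have [a a_coords] := coker_coords.
apply: (iff_trans (Xi_eq_comp_of M_cc i j)); rewrite !(ZY_congr a_coords).
split=> [compE | [rank_cond pinv_cond] l].
  have -> : coord_mx a i = coord_mx a j by apply/matrixP => q l; rewrite !mxE compE.
  by apply: pinv_condition_same; rewrite ?coord_mx_free ?sdiag_unit.
have := pinv_condition_range (coord_mx_free a_coords i) (coord_mx_free a_coords j)
  (sdiag_unit i) (sdiag_unit j) rank_cond pinv_cond.
by rewrite -mulmxA => /esym /(coord_mx_comp_of a_coords) ->.
Qed.

End Mixture.

Unset Implicit Arguments.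

(* Lemma 2. *)
Theorem lemma2 (R : realType) (L n : nat)
  (M : 'I_L -> 'M[R]_n) (s : 'I_L -> 'I_n -> R)
  (U V : 'I_n -> 'M[R]_(L, n)) (Sg : 'I_n -> 'M[R]_L)
  (B : 'I_(ncomp M) -> rowidx L n -> R) (i j : 'I_n) :
  mixture M s ->
  (forall (l : 'I_L) (k : 'I_n), 0 < s l k) ->
  (forall k : 'I_n, \rank (Pmat M s k) = L) ->
  (forall k : 'I_n, \rank (Mplus M k) = L) ->
  companion_connected M ->
  coker_spanned_by_indicators M (shuffle (Pmat M s) (Qmat M s)) ->
  (forall k : 'I_n, compact_svd (Omat M s k) (U k) (Sg k) (V k)) ->
  coker_basis (shuffle U (fun k => Sg k *m V k)) B ->
  (Xi_eq M i j <->
     (\rank (pinv (Zprime B j *m (Yprime B j)^T) *m (Zprime B i *m (Yprime B i)^T)) = L /\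
      pinv (pinv (Zprime B i *m (Yprime B i)^T) *m (Zprime B j *m (Yprime B j)^T))
        = pinv (Zprime B j *m (Yprime B j)^T) *m (Zprime B i *m (Yprime B i)^T))).
Proof.
move=> _ s_pos P_rank _ M_cc coker_A svd_O basis_B.
exact: component_criterion s_pos P_rank M_cc coker_A svd_O basis_B i j.
Qed.
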